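(* There exist universal positive constants $\alpha,\beta,\gamma$ such that the following holds. Let $n\ge 2$, $K\in T^n$, $r\in(0,1)$ and $\varepsilon\in(0,1/25)$, and assume that \begin{itemize} \item $rD_n\subseteq K$, and \item $(1-\varepsilon)D_n\subseteq K+2\sqrt{\varepsilon}\,D_n$. \end{itemize} Then there exist a number $N\le \alpha+\beta|\log\varepsilon|+\gamma|\log r|$ and directions $u_1,\dots,u_N\in S^{n-1}$ such that $\tilde K:=M_{u_N}\circ\cdots\circ M_{u_1}(K)$ satisfies \[ (1-4\sqrt{\varepsilon})D_n\subseteq \tilde K . \]
   Context: $D_n$ denotes the closed Euclidean unit ball in $\mathbb R^n$, $S^{n-1}$ the unit sphere, and $+$ the Minkowski sum. A nonempty compact set $K\subset\mathbb R^n$ is called star shaped if $x\in K$ implies that the segment $[0,x]\subseteq K$; $T^n$ denotes the family of star shaped sets in $\mathbb R^n$. For $u\in S^{n-1}$, $R_u$ denotes the reflection with respect to the hyperplane $u^\perp$, and the Minkowski symmetrization of a set $K$ in direction $u$ is $M_u(K)=\frac{K+R_uK}{2}$ ($K$ need not be convex). *)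

From mathcomp Require Import all_boot.
From Stdlib Require Import Reals.
Set Implicit Arguments.
Unset Strict Implicit.

Local Open Scope R_scope.

Definition vec (n : nat) := 'I_n -> R.

Definition vadd {n} (x y : vec n) : vec n := fun i => x i + y i.
Definition vsub {n} (x y : vec n) : vec n := fun i => x i - y i.
Definition vscale {n} (t : R) (x : vec n) : vec n := fun i => t * x i.
Definition vzero {n} : vec n := fun _ => 0.

Definition dot {n} (x y : vec n) : R := \big[Rplus/0]_(i < n) (x i * y i).
Definition vnorm {n} (x : vec n) : R := sqrt (dot x x).

Definition vset (n : nat) := vec n -> Prop.
Definition vsubset {n} (A B : vset n) : Prop := forall x, A x -> B x.

Definition cball (n : nat) (t : R) : vset n := fun x => vnorm x <= t.

Arguments cball n t x : clear implicits.

Definition msum {n} (A B : vset n) : vset n :=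
  fun x => exists a b, A a /\ B b /\ x = vadd a b.
Definition sscale {n} (t : R) (A : vset n) : vset n :=
  fun x => exists a, A a /\ x = vscale t a.
Definition simage {n} (f : vec n -> vec n) (A : vset n) : vset n :=
  fun x => exists a, A a /\ x = f a.

Definition closed_set {n} (K : vset n) : Prop :=
  forall x, (forall e, 0 < e -> exists y, K y /\ vnorm (vsub x y) < e) -> K x.
Definition bounded_set {n} (K : vset n) : Prop :=
  exists M, forall x, K x -> vnorm x <= M.
Definition compact_set {n} (K : vset n) : Prop := closed_set K /\ bounded_set K.

(* T^n : nonempty compact star shaped (w.r.t. 0) sets *)
Definition star_shaped {n} (K : vset n) : Prop :=
  (exists x, K x) /\ compact_set K /\
  (forall x, K x -> forall t, 0 <= t <= 1 -> K (vscale t x)).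

Definition on_sphere {n} (u : vec n) : Prop := vnorm u = 1.

(* Reflection in the hyperplane u^perp (u a unit vector) *)
Definition refl {n} (u : vec n) (x : vec n) : vec n :=
  vsub x (vscale (2 * dot x u) u).

Definition minksym {n} (u : vec n) (K : vset n) : vset n :=
  sscale (1/2) (msum K (simage (refl u) K)).

(* iter_minksym [u1; ...; uN] K = M_{uN} o ... o M_{u1} (K) *)
Fixpoint iter_minksym {n} (us : list (vec n)) (K : vset n) : vset n :=
  match us with
  | nil => K
  | cons u us' => iter_minksym us' (minksym u K)
  end.

From Stdlib Require Import Reals List Lra Lia ZArith FunctionalExtensionality.
From HB Require Import structures.
From mathcomp Require Import ssreflect ssrfun ssrbool eqtype fintype bigop.

(* One direction [u] is used throughout.  The invariant is that [A] is star shaped,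
   [s D_n ⊆ A] and [rho D_n ⊆ A + t D_n], with [rho = 1 - eps] and [t = 2 sqrt eps].
   [M_u] preserves star-shapedness and the approximation of [rho D_n], and since
   [s D_n] is [R_u]-invariant,
   [M_u A ⊇ (A + s D_n) / 2].  While [s <= t] the latter contains [(s rho / 2t) D_n],
   so [s] grows by the factor [rho / 2t >= 6/5] and [O(|log r|)] steps give [s >= t];
   afterwards it contains [((rho + s - t) / 2) D_n], so the gap [rho - t - s] halves
   and [O(|log eps|)] more steps give [s >= rho - t - eps >= 1 - 4 sqrt eps]. *)

Set Implicit Arguments.
Unset Strict Implicit.
Local Open Scope R_scope.

HB.instance Definition _ := Monoid.isComLaw.Build R 0 Rplus
  (fun a b c => esym (Rplus_assoc a b c)) Rplus_comm Rplus_0_l.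

Ltac vec_ext := apply: functional_extensionality => ?; rewrite /vadd /vsub /vscale.

Section Euclidean.
Variable n : nat.
Implicit Types (x y z : vec n) (c : R).

Lemma dotC x y : dot x y = dot y x.
Proof. by apply: eq_bigr => i _; rewrite Rmult_comm. Qed.

Lemma dotDl x y z : dot (vadd x y) z = dot x z + dot y z.
Proof. by rewrite /dot -big_split; apply: eq_bigr => i _; rewrite /vadd Rmult_plus_distr_r. Qed.

Lemma dotZl c x y : dot (vscale c x) y = c * dot x y.
Proof.
rewrite /dot (big_morph (Rmult c) (Rmult_plus_distr_l c) (Rmult_0_r c)).
by apply: eq_bigr => i _; rewrite /vscale Rmult_assoc.
Qed.

Lemma dotZr c x y : dot x (vscale c y) = c * dot x y.
Proof. by rewrite dotC dotZl dotC. Qed.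

Lemma dotBl x y z : dot (vsub x y) z = dot x z - dot y z.
Proof.
have -> : vsub x y = vadd x (vscale (-1) y) by vec_ext; ring.
by rewrite dotDl dotZl; ring.
Qed.

Lemma dot_ge0 x : 0 <= dot x x.
Proof. by apply: big_ind => [|a b|i _]; [lra | lra | apply: Rle_0_sqr]. Qed.

Lemma vnorm_ge0 x : 0 <= vnorm x.
Proof. exact: sqrt_pos. Qed.

Lemma vnorm_sq x : vnorm x * vnorm x = dot x x.
Proof. exact/sqrt_sqrt/dot_ge0. Qed.

Lemma vnorm_le x c : 0 <= c -> dot x x <= c * c -> vnorm x <= c.
Proof. by move=> c_ge0 le_xc; rewrite -(sqrt_square c c_ge0); apply: sqrt_le_1_alt. Qed.

Lemma vnorm_scale c x : vnorm (vscale c x) = Rabs c * vnorm x.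
Proof.
rewrite /vnorm dotZl (dotC x) dotZl -Rmult_assoc sqrt_mult_alt ?sqrt_Rsqr_abs //.
exact: Rle_0_sqr.
Qed.

Lemma vnorm_rescale x c : 0 < vnorm x -> 0 <= c -> vnorm (vscale (c / vnorm x) x) = c.
Proof.
by move=> x_gt0 c_ge0; rewrite vnorm_scale Rabs_pos_eq; [field | apply: Rle_mult_inv_pos]; lra.
Qed.

Lemma cauchy_schwarz x y : dot x y * dot x y <= dot x x * dot y y.
Proof.
have quad a b : 0 <= a * a * dot x x - 2 * a * b * dot x y + b * b * dot y y.
  have := dot_ge0 (vsub (vscale a x) (vscale b y)).
  by rewrite !dotBl !(dotC _ (vsub _ _)) !dotBl !dotZl !dotZr (dotC y x); lra.
have [yy_gt0|yy0] := Rle_lt_or_eq_dec 0 (dot y y) (dot_ge0 y).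
  by have := quad (dot y y) (dot x y); nra.
have [xx_gt0|xx0] := Rle_lt_or_eq_dec 0 (dot x x) (dot_ge0 x).
  by have := quad (dot x y) (dot x x); rewrite -yy0; nra.
by have := quad 1 (dot x y); rewrite -yy0 -xx0; nra.
Qed.

Lemma dot_le_vnorm x y : dot x y <= vnorm x * vnorm y.
Proof.
have := cauchy_schwarz x y; rewrite -!vnorm_sq.
have := Rmult_le_pos _ _ (vnorm_ge0 x) (vnorm_ge0 y).
case: (Rle_or_lt (dot x y) (vnorm x * vnorm y)) => //; nra.
Qed.

Lemma vnormD x y : vnorm (vadd x y) <= vnorm x + vnorm y.
Proof.
apply: vnorm_le; first by have := vnorm_ge0 x; have := vnorm_ge0 y; lra.
rewrite !dotDl !(dotC _ (vadd _ _)) !dotDl (dotC y x) -!vnorm_sq.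
have := dot_le_vnorm x y; lra.
Qed.

End Euclidean.

Section Reflection.
Variables (n : nat) (u : vec n).
Implicit Types (x y : vec n) (c : R).

Lemma reflB x y : refl u (vsub x y) = vsub (refl u x) (refl u y).
Proof. by rewrite {1}/refl dotBl; vec_ext; rewrite /refl /vsub /vscale; ring. Qed.

Lemma reflZ c x : refl u (vscale c x) = vscale c (refl u x).
Proof. by rewrite {1}/refl dotZl; vec_ext; rewrite /refl /vsub /vscale; ring. Qed.

Hypothesis u_unit : on_sphere u.

Lemma dot_unit : dot u u = 1.
Proof. by rewrite -vnorm_sq u_unit Rmult_1_r. Qed.

Lemma dot_refl_unit x : dot (refl u x) u = - dot x u.
Proof. by rewrite /refl dotBl dotZl dot_unit; ring. Qed.

Lemma refl_invol x : refl u (refl u x) = x.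
Proof. by rewrite {1}/refl dot_refl_unit; vec_ext; rewrite /refl /vsub /vscale; ring. Qed.

Lemma vnorm_refl x : vnorm (refl u x) = vnorm x.
Proof.
rewrite /vnorm /refl !dotBl !(dotC _ (vsub _ _)) !dotBl !dotZl !dotZr (dotC u x) dot_unit.
by congr sqrt; ring.
Qed.

End Reflection.

Definition star_closed {n} (A : vset n) : Prop :=
  forall a, A a -> forall l, 0 <= l <= 1 -> A (vscale l a).

Definition approximates {n} (rho t : R) (A : vset n) : Prop :=
  forall x, vnorm x <= rho -> exists a, A a /\ vnorm (vsub x a) <= t.

Section Symmetrization.
Variables (n : nat) (u : vec n) (A : vset n).
Hypothesis u_unit : on_sphere u.

(* The ball [s D_n] is fixed by [R_u], so [M_u A] contains [(A + s D_n) / 2]. *)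
Lemma minksym_half_sum s a b :
  vsubset (cball n s) A -> A a -> vnorm b <= s -> minksym u A (vscale (1/2) (vadd a b)).
Proof.
move=> ballA Aa b_le; exists (vadd a b); split => //; exists a, b; split => //; split => //.
exists (refl u b); rewrite refl_invol //; split => //.
by apply: ballA; rewrite /cball vnorm_refl.
Qed.

Lemma minksym_star_closed : star_closed A -> star_closed (minksym u A).
Proof.
move=> starA _ [_ [[a [_ [Aa [[b [Ab ->]] ->]]]] ->]] l l01.
exists (vadd (vscale l a) (refl u (vscale l b))); split.
  exists (vscale l a), (refl u (vscale l b)); split; first exact: starA.
  by split => //; exists (vscale l b); split => //; apply: starA.
by rewrite reflZ; vec_ext; ring.
Qed.

Lemma minksym_approximates rho t : approximates rho t A -> approximates rho t (minksym u A).
Proof.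
move=> approxA x x_le.
have [a [Aa xa]] := approxA x x_le.
have [b [Ab xb]] := approxA (refl u x) ltac:(by rewrite vnorm_refl).
exists (vscale (1/2) (vadd a (refl u b))); split.
  by exists (vadd a (refl u b)); split => //; exists a, (refl u b); split => //; split => //; exists b.
have -> : vsub x (vscale (1/2) (vadd a (refl u b))) =
          vscale (1/2) (vadd (vsub x a) (refl u (vsub (refl u x) b))).
  by rewrite reflB refl_invol //; vec_ext; field.
rewrite vnorm_scale Rabs_pos_eq; last lra.
have := vnormD (vsub x a) (refl u (vsub (refl u x) b)); rewrite vnorm_refl //; lra.
Qed.

End Symmetrization.

Record sandwiched {n} (rho t s : R) (A : vset n) : Prop := Sandwiched {
  sandwiched_ball : vsubset (cball n s) A;
  sandwiched_approx : approximates rho t A;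
  sandwiched_star : star_closed A }.

Lemma sandwiched_mono {n} rho t s s' (A : vset n) :
  sandwiched rho t s A -> s' <= s -> sandwiched rho t s' A.
Proof.
by case=> ballA ? ? le_s; split => // x; rewrite /cball => x_le; apply: ballA; rewrite /cball; lra.
Qed.

Lemma sandwiched_star_shaped {n} rho t s (K : vset n) :
  star_shaped K -> vsubset (cball n s) K -> vsubset (cball n rho) (msum K (cball n t)) ->
  sandwiched rho t s K.
Proof.
move=> [_ [_ starK]] ballK approxK; split => // x /approxK [a [b [Ka [b_le ->]]]].
by exists a; split => //; have -> : vsub (vadd a b) a = b by vec_ext; ring.
Qed.

Section Growth.
Variables (n : nat) (rho t s : R) (A : vset n).
Hypothesis sandA : sandwiched rho t s A.
Hypothesis rho_gt0 : 0 < rho.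

(* [half_sum_ball r] encodes [r D_n ⊆ (A + s D_n) / 2]. *)
Definition half_sum_ball (r : R) : Prop :=
  forall x, vnorm x <= r -> exists a b, A a /\ vnorm b <= s /\ x = vscale (1/2) (vadd a b).

(* A point [x] is written as [(l a + l (p - a)) / 2], where [p] is the radial projection
   of [x] to [rho S^{n-1}], [a] approximates [p] and [l = 2 |x| / rho]. *)
Lemma half_sum_ball_small : 0 < s <= t -> half_sum_ball (s * rho / (2 * t)).
Proof.
case: sandA => ballA approxA starA [s_gt0 s_le_t] x x_le.
have [x_gt0|x0] := Rle_lt_or_eq_dec 0 (vnorm x) (vnorm_ge0 x); last first.
  exists x, x; rewrite -x0; split; first by apply: ballA; rewrite /cball -x0; lra.
  by split; [lra | vec_ext; field].
set p := vscale (rho / vnorm x) x.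
have [a [Aa pa]] := approxA p (Req_le _ _ (vnorm_rescale x_gt0 (Rlt_le _ _ rho_gt0))).
set l := 2 * vnorm x / rho.
have l_ge0 : 0 <= l by apply: Rle_mult_inv_pos; lra.
have lt_le_s : l * t <= s.
  have := Rmult_le_compat_r (2 * t) _ _ ltac:(lra) x_le.
  have -> : s * rho / (2 * t) * (2 * t) = s * rho by field; lra.
  move=> x_le'; apply: (Rmult_le_reg_r rho) => //.
  by have -> : l * t * rho = vnorm x * (2 * t) by rewrite /l; field; lra.
exists (vscale l a), (vscale l (vsub p a)); split.
  by apply: starA => //; split => //; nra.
split; last by rewrite /p /l; vec_ext; field; lra.
rewrite vnorm_scale Rabs_pos_eq //.
by apply: Rle_trans lt_le_s; apply: Rmult_le_compat_l.
Qed.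

(* Here [p] is the radial projection of [2 x] to [rho D_n]. *)
Lemma half_sum_ball_large : t <= s -> half_sum_ball ((rho + s - t) / 2).
Proof.
case: sandA => _ approxA _ t_le_s x x_le.
have [p [p_le px]] : exists p, vnorm p <= rho /\ vnorm (vsub (vscale 2 x) p) <= s - t.
  case: (Rle_lt_dec (2 * vnorm x) rho) => x_rho.
    exists (vscale 2 x); rewrite vnorm_scale Rabs_pos_eq; last lra.
    have -> : vsub (vscale 2 x) (vscale 2 x) = vscale 0 x by vec_ext; ring.
    by rewrite vnorm_scale Rabs_R0; lra.
  have x_gt0 : 0 < vnorm x by have := vnorm_ge0 x; lra.
  exists (vscale (rho / vnorm x) x); rewrite vnorm_rescale //; last lra.
  have -> : vsub (vscale 2 x) (vscale (rho / vnorm x) x) = vscale ((2 * vnorm x - rho) / vnorm x) x.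
    by vec_ext; field; lra.
  by rewrite vnorm_rescale //; lra.
have [a [Aa pa]] := approxA p p_le.
exists a, (vsub (vscale 2 x) a); split => //; split; last by vec_ext; field.
have -> : vsub (vscale 2 x) a = vadd (vsub (vscale 2 x) p) (vsub p a) by vec_ext; ring.
by have := vnormD (vsub (vscale 2 x) p) (vsub p a); lra.
Qed.

Lemma minksym_sandwiched (u : vec n) r :
  on_sphere u -> half_sum_ball r -> sandwiched rho t r (minksym u A).
Proof.
case: sandA => ballA approxA starA u_unit half_r; split.
- by move=> x /half_r [a [b [Aa [b_le ->]]]]; apply: minksym_half_sum ballA Aa b_le.
- exact: minksym_approximates.
- exact: minksym_star_closed.
Qed.

End Growth.

Lemma iter_minksym_repeatD {n} (u : vec n) j k (A : vset n) :
  iter_minksym (repeat u (j + k)) A = iter_minksym (repeat u k) (iter_minksym (repeat u j) A).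
Proof. by elim: j A => [|j IH] A //=. Qed.

Section Iteration.
Variables (n : nat) (u : vec n) (rho t : R).
Hypotheses (u_unit : on_sphere u) (t_gt0 : 0 < t) (two_t_le_rho : 2 * t <= rho).

Lemma sandwiched_iter_small j : forall (A : vset n) s, 0 < s -> sandwiched rho t (Rmin t s) A ->
  sandwiched rho t (Rmin t (s * (rho / (2 * t)) ^ j)) (iter_minksym (repeat u j) A).
Proof.
elim: j => [|j IH] A s s_gt0 sandA /=; first by rewrite Rmult_1_r.
set q := rho / (2 * t).
have q_ge1 : 1 <= q.
  by apply: (Rmult_le_reg_r (2 * t)); [lra | rewrite /q; field_simplify; lra].
rewrite (_ : s * (q * q ^ j) = s * q * q ^ j); last ring.
apply: IH; first nra.
have rho_gt0 : 0 < rho by lra.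
have min_gt0 : 0 < Rmin t s by apply: Rmin_glb_lt.
apply: sandwiched_mono (minksym_sandwiched sandA u_unit
  (half_sum_ball_small sandA rho_gt0 (conj min_gt0 (Rmin_l t s)))) _.
have -> : Rmin t s * rho / (2 * t) = Rmin t s * q by rewrite /q; field; lra.
by rewrite /Rmin; case: Rle_dec; case: Rle_dec; nra.
Qed.

Lemma sandwiched_iter_large j : forall (A : vset n) s, t <= s -> sandwiched rho t s A ->
  sandwiched rho t (rho - t - (rho - t - s) / 2 ^ j) (iter_minksym (repeat u j) A).
Proof.
elim: j => [|j IH] A s t_le_s sandA /=.
  by apply: sandwiched_mono sandA _; rewrite Rdiv_1_r; lra.
have := IH _ ((rho + s - t) / 2) ltac:(lra)
  (minksym_sandwiched sandA u_unit (half_sum_ball_large sandA ltac:(lra) t_le_s)).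
have pow_gt0 : 0 < 2 ^ j by apply: pow_lt; lra.
by have -> : (rho - t - (rho + s - t) / 2) / 2 ^ j = (rho - t - s) / (2 * 2 ^ j) by field; lra.
Qed.

Lemma sandwiched_iter N1 N2 (A : vset n) s :
  0 < s -> t <= s * (rho / (2 * t)) ^ N1 -> sandwiched rho t s A ->
  sandwiched rho t (rho - t - (rho - 2 * t) / 2 ^ N2) (iter_minksym (repeat u (N1 + N2)) A).
Proof.
move=> s_gt0 t_le sandA; rewrite iter_minksym_repeatD.
have := sandwiched_iter_small N1 s_gt0 (sandwiched_mono sandA (Rmin_r t s)).
rewrite Rmin_left // => sand1.
by rewrite (_ : rho - 2 * t = rho - t - t); [exact: sandwiched_iter_large (Rle_refl t) sand1 | ring].
Qed.

End Iteration.

Lemma pow_ln_bound c x : 1 < c -> 0 < x ->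
  exists N : nat, 1 <= x * c ^ N /\ INR N <= / ln c * Rabs (ln x) + 1.
Proof.
move=> c_gt1 x_gt0.
have lnc_gt0 : 0 < ln c by rewrite -ln_1; apply: ln_increasing; lra.
set Y := / ln c * Rabs (ln x).
have Y_ge0 : 0 <= Y by apply: Rmult_le_pos; [apply/Rlt_le/Rinv_0_lt_compat | apply: Rabs_pos].
have [Y_lt Y_le] := archimed Y.
have N_eq : INR (Z.to_nat (up Y)) = IZR (up Y).
  by rewrite INR_IZR_INZ Z2Nat.id //; apply: le_IZR; lra.
exists (Z.to_nat (up Y)); split; last by rewrite N_eq; lra.
have pow_gt0 : 0 < c ^ Z.to_nat (up Y) by apply: pow_lt; lra.
apply/Rlt_le/ln_lt_inv; [lra | exact: Rmult_lt_0_compat |].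
rewrite ln_1 ln_mult // ln_pow ?N_eq; last lra.
have : Y * ln c = Rabs (ln x) by rewrite /Y; field; lra.
have := Rle_abs (- ln x); rewrite Rabs_Ropp; nra.
Qed.

Definition basis0 n : vec (S n) := fun i => if i == ord0 then 1 else 0.
Arguments basis0 : clear implicits.

Lemma on_sphere_basis0 n : on_sphere (basis0 n).
Proof.
rewrite /on_sphere /vnorm /dot /basis0 big_ord_recl big1 => [|i _]; last by rewrite lift_eqF; ring.
by rewrite eqxx Rmult_1_r Rplus_0_r sqrt_1.
Qed.

Theorem lemma2p3 :
  exists alpha beta gamma : R,
    (0 < alpha)%R /\ (0 < beta)%R /\ (0 < gamma)%R /\
    forall (n : nat) (K : vset n) (r eps : R),
      (2 <= n)%nat ->
      star_shaped K ->
      (0 < r < 1)%R ->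
      (0 < eps < 1 / 25)%R ->
      vsubset (cball n r%R) K ->
      vsubset (cball n (1 - eps)%R) (msum K (cball n (2 * sqrt eps)%R)) ->
      exists us : list (vec n),
        (INR (length us) <= alpha + beta * Rabs (ln eps) + gamma * Rabs (ln r))%R /\
        Forall on_sphere us /\
        vsubset (cball n (1 - 4 * sqrt eps)%R) (iter_minksym us K).
Proof.
have inv_ln_gt0 c : 1 < c -> 0 < / ln c.
  by move=> ?; apply/Rinv_0_lt_compat; rewrite -ln_1; apply: ln_increasing; lra.
exists 2, (/ ln 2), (/ ln (6/5)); split; first lra.
split; first by apply: inv_ln_gt0; lra.
split; first by apply: inv_ln_gt0; lra.
case=> [|n] K r eps n_ge2 starK r01 eps_small ballK approxK; first lia.
have se_gt0 : 0 < sqrt eps by apply: sqrt_lt_R0; lra.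
have se_lt : sqrt eps < 1 / 5.
  by rewrite -(sqrt_square (1/5)); [apply: sqrt_lt_1_alt; lra | lra].
have eps_le_se : eps <= sqrt eps by rewrite -{1}(sqrt_sqrt eps); nra.
set t := 2 * sqrt eps; set rho := 1 - eps.
have t_gt0 : 0 < t by rewrite /t; lra.
have two_t_le_rho : 2 * t <= rho by rewrite /t /rho; lra.
have [N1 [r_pow N1_le]] := @pow_ln_bound (6/5) r ltac:(lra) ltac:(lra).
have [N2 [eps_pow N2_le]] := @pow_ln_bound 2 eps ltac:(lra) ltac:(lra).
exists (repeat (basis0 n) (N1 + N2)); split; last split.
- by rewrite repeat_length plus_INR; lra.
- by apply/Forall_forall => y y_in; rewrite (repeat_spec _ _ _ y_in); apply: on_sphere_basis0.
have t_le : t <= r * (rho / (2 * t)) ^ N1.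
  have : (6/5) ^ N1 <= (rho / (2 * t)) ^ N1.
    apply: pow_incr; split; first lra.
    by apply: (Rmult_le_reg_r (2 * t)) => //; rewrite /rho /t; field_simplify; lra.
  by rewrite /t; nra.
have [ball _ _] := sandwiched_iter (on_sphere_basis0 n) t_gt0 two_t_le_rho N2 (proj1 r01) t_le
  (sandwiched_star_shaped starK ballK approxK).
move=> x x_le; apply: ball; move: x_le; rewrite /cball.
have pow_gt0 : 0 < 2 ^ N2 by apply: pow_lt; lra.
have : (rho - 2 * t) / 2 ^ N2 <= eps.
  apply: (Rmult_le_reg_r (2 ^ N2)) => //; rewrite /Rdiv Rmult_assoc Rinv_l; last lra.
  by rewrite /rho /t; nra.
rewrite /rho /t; lra.
Qed.
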